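(* Let $\mathbb{F}$ be a field and $\mathcal{C}_2 \subsetneqq \mathcal{C}_1 \subseteq \mathbb{F}^{m \times n}$ linear codes. Then $K_{M,0}(\mathcal{C}_1,\mathcal{C}_2) = 0$, $K_{M,n}(\mathcal{C}_1,\mathcal{C}_2) = \dim(\mathcal{C}_1) - \dim(\mathcal{C}_2)$, and for every $0 \leq \mu \leq n-1$, $$0 \leq K_{M,\mu+1}(\mathcal{C}_1,\mathcal{C}_2) - K_{M,\mu}(\mathcal{C}_1,\mathcal{C}_2) \leq m.$$
   Context: ${\rm Row}(V)$ is the row space. For a subspace $\mathcal{L} \subseteq \mathbb{F}^n$, $\mathcal{V}_\mathcal{L} = \{V \in \mathbb{F}^{m\times n} \mid {\rm Row}(V) \subseteq \mathcal{L}\}$. For $0 \le \mu \le n$, $K_{M,\mu}(\mathcal{C}_1,\mathcal{C}_2) = \max\{\dim(\mathcal{C}_1 \cap \mathcal{V}_\mathcal{L}) - \dim(\mathcal{C}_2 \cap \mathcal{V}_\mathcal{L}) \mid \mathcal{L} \subseteq \mathbb{F}^n \text{ subspace}, \dim \mathcal{L} \le \mu\}$. *)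

From HB Require Import structures.
From mathcomp Require Import all_boot all_order all_algebra.
From mathcomp Require Import boolp.
Set Implicit Arguments. Unset Strict Implicit. Unset Printing Implicit Defensive.
Import Order.TTheory GRing.Theory Num.Theory.
Local Open Scope ring_scope.

Section Defs.
Variables (F : fieldType) (m n : nat).

(* V_L = { V in F^{m x n} | Row(V) <= L } : every row of V lies in L
   (Row(V) is the span of the rows of V). *)
Definition VL (L : {vspace 'rV[F]_n}) : {vspace 'M[F]_(m, n)} :=
  (\bigcap_(i < m) (linfun (row i) @^-1: L))%VS.

Definition Kdiff (C1 C2 : {vspace 'M[F]_(m, n)}) (L : {vspace 'rV[F]_n}) : int :=
  (\dim (C1 :&: VL L)%VS)%:Z - (\dim (C2 :&: VL L)%VS)%:Z.

(* K_{M,mu}(C1,C2) = max { Kdiff C1 C2 L | dim L <= mu }.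
   The set of values is nonempty (L = 0 gives 0), contained in [-mn, mn],
   and its max is >= 0 (attained at L = 0) and <= dim C1 <= m*n; hence the
   maximum equals the largest k in {0,..,m*n} that is attained. *)
Definition KM (C1 C2 : {vspace 'M[F]_(m, n)}) (mu : nat) : int :=
  (\max_(k < (m * n).+1 |
      `[< exists L : {vspace 'rV[F]_n}, (\dim L <= mu)%N /\ Kdiff C1 C2 L = k%:Z >])
     (k : nat))%:Z.

End Defs.

(* K_{M,mu} is a maximum over the subspaces L with dim L <= mu, so it grows
   with mu; it vanishes at mu = 0 because V_0 = 0, and at mu = n the choice
   L = F^n gives V_L = F^(m x n).  Everything else rests on one inequality:
   for U <= V, dim (V :&: W) - dim (U :&: W) <= dim V - dim U.  With
   U = C2, V = C1 it bounds every value by dim C1 - dim C2.  For the increment,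
   split an optimal L of dimension mu+1 as L' + <[v]> with dim L' = mu; then
   V_L <= V_L' + V_<[v]>, and V_<[v]> (the matrices c *m v, c a column) has
   dimension at most m, so the inequality with U = V_L', V = V_L gives
   Kdiff L - Kdiff L' <= m. *)
From HB Require Import structures.
From mathcomp Require Import all_boot all_order all_algebra.
From mathcomp Require Import boolp zify.
Set Implicit Arguments. Unset Strict Implicit. Unset Printing Implicit Defensive.
Import Order.TTheory GRing.Theory Num.Theory.
Local Open Scope ring_scope.

Lemma leq_dimv_cap_sub (K : fieldType) (vT : vectType K) (U V W : {vspace vT}) :
  (U <= V)%VS -> (\dim (V :&: W) + \dim U <= \dim V + \dim (U :&: W))%N.
Proof.
move=> sUV; have := dimv_sum_cap (V :&: W) U.
have sum_le : (\dim (V :&: W + U) <= \dim V)%N.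
  by apply: dimvS; rewrite subv_add capvSl sUV.
have -> : (V :&: W :&: U = U :&: W)%VS.
  by rewrite capvC capvA (capv_idPl sUV).
lia.
Qed.

Section RowSpaceRestriction.
Variables (F : fieldType) (m n : nat).

Lemma mem_VL (L : {vspace 'rV[F]_n}) (M : 'M[F]_(m, n)) :
  (M \in VL m L) = [forall i, row i M \in L].
Proof.
rewrite /VL memvE; apply/subv_bigcapP/forallP => rowsL i.
  by move: (rowsL i isT); rewrite -memvE -memv_preim lfunE.
by move=> _; rewrite -memvE -memv_preim lfunE; apply: rowsL.
Qed.

Lemma VLS (L1 L2 : {vspace 'rV[F]_n}) : (L1 <= L2)%VS -> (VL m L1 <= VL m L2)%VS.
Proof.
move=> /subvP sL12; apply/subvP => M; rewrite !mem_VL => /forallP rowsL1.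
by apply/forallP => i; apply: sL12.
Qed.

Lemma VL0 : VL m (0%VS : {vspace 'rV[F]_n}) = 0%VS.
Proof.
apply/eqP; rewrite -subv0; apply/subvP => M; rewrite mem_VL memv0 => /forallP M0.
by apply/eqP/row_matrixP => i; rewrite row0; apply/eqP; rewrite -memv0.
Qed.

Lemma VLfull : VL m (fullv : {vspace 'rV[F]_n}) = fullv.
Proof.
apply/eqP; rewrite eqEsubv subvf; apply/subvP => M _.
by rewrite mem_VL; apply/forallP => i; rewrite memvf.
Qed.

Lemma VL_addv (L1 L2 : {vspace 'rV[F]_n}) :
  (VL m (L1 + L2) <= VL m L1 + VL m L2)%VS.
Proof.
apply/subvP => M; rewrite mem_VL => /forallP rowsL.
have /fin_all_exists [p Hp] : forall i, exists p : 'rV[F]_n * 'rV[F]_n,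
    [/\ p.1 \in L1, p.2 \in L2 & row i M = p.1 + p.2].
  by move=> i; have /memv_addP [a La [b Lb ->]] := rowsL i; exists (a, b).
have -> : M = \matrix_i (p i).1 + \matrix_i (p i).2.
  by apply/row_matrixP => i; case: (Hp i) => _ _ ->; apply/rowP => j; rewrite !mxE.
by apply: memv_add; rewrite mem_VL; apply/forallP => i; rewrite rowK; case: (Hp i).
Qed.

Lemma dim_VL_vline (v : 'rV[F]_n) : (\dim (VL m <[v]>) <= m)%N.
Proof.
pose f := linfun (@mulmxr F m 1 n v).
have sub_img : (VL m <[v]> <= limg f)%VS.
  apply/subvP => M; rewrite mem_VL => /forallP rowsv.
  have /fin_all_exists [k Hk] : forall i, exists k, row i M = k *: v.
    by move=> i; apply/vlineP.
  have -> : M = f (\col_i k i).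
    rewrite lfunE /=; apply/row_matrixP => i; rewrite Hk; apply/rowP => j.
    by rewrite !mxE big_ord1 !mxE.
  exact: memv_img (memvf _).
have dim_cV : (\dim (fullv : {vspace 'cV[F]_m}) <= m)%N by rewrite dimvf dim_matrix; lia.
apply: leq_trans (dimvS sub_img) (leq_trans _ dim_cV).
by rewrite -(limg_ker_dim f fullv) leq_addl.
Qed.

Lemma VL_drop_vline (L : {vspace 'rV[F]_n}) : L != 0%VS ->
  exists L', [/\ (L' <= L)%VS, \dim L' = (\dim L).-1
              & (\dim (VL m L) <= \dim (VL m L') + m)%N].
Proof.
move=> L_neq0; set v := vpick L; exists (L :\: <[v]>)%VS.
have vL : (<[v]> <= L)%VS by rewrite -memvE memv_pick.
have dim_v : \dim <[v]> = 1%N by rewrite dim_vline /v vpick0 L_neq0.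
split; first exact: diffvSl.
  by have := dimv_cap_compl L <[v]>; rewrite (capv_idPr vL) dim_v; lia.
have sVL : (VL m L <= VL m (L :\: <[v]>) + VL m <[v]>)%VS.
  by rewrite -{1}(addv_idPl vL) -addv_diff VL_addv.
apply: leq_trans (dimvS sVL) (leq_trans (dimv_add_leqif _ _) _).
by rewrite leq_add2l dim_VL_vline.
Qed.

Variables (C1 C2 : {vspace 'M[F]_(m, n)}).
Hypothesis sC21 : (C2 <= C1)%VS.

Lemma Kdiff_nat L :
  Kdiff C1 C2 L = (\dim (C1 :&: VL m L) - \dim (C2 :&: VL m L))%N%:Z.
Proof. by rewrite /Kdiff subzn // dimvS // capvS. Qed.

Lemma Kdiff0 : Kdiff C1 C2 0%VS = 0.
Proof. by rewrite /Kdiff VL0 !capv0 dimv0. Qed.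

Lemma Kdiff_le_dim L : Kdiff C1 C2 L <= (\dim C1)%:Z - (\dim C2)%:Z.
Proof. by have := leq_dimv_cap_sub (VL m L) sC21; rewrite /Kdiff; lia. Qed.

Lemma Kdiff_subv_le (L' L : {vspace 'rV[F]_n}) : (L' <= L)%VS ->
  Kdiff C1 C2 L - Kdiff C1 C2 L' <= (\dim (VL m L))%:Z - (\dim (VL m L'))%:Z.
Proof.
move=> sL; have := leq_dimv_cap_sub C1 (VLS sL).
have := dimvS (capvS (subvv C2) (VLS sL)).
by rewrite /Kdiff [(VL m L :&: _)%VS]capvC [(VL m L' :&: _)%VS]capvC; lia.
Qed.

Lemma Kdiff_le_KM mu L : (\dim L <= mu)%N -> Kdiff C1 C2 L <= KM C1 C2 mu.
Proof.
move=> dimL; have Kdiff_lt : (\dim (C1 :&: VL m L) - \dim (C2 :&: VL m L) < (m * n).+1)%N.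
  rewrite ltnS (leq_trans (leq_subr _ _)) //.
  by rewrite (leq_trans (dimvS (subvf _))) // dimvf dim_matrix.
rewrite Kdiff_nat /KM lez_nat; apply: (leq_bigmax_cond (Ordinal Kdiff_lt)).
by apply/asboolP; exists L; rewrite Kdiff_nat.
Qed.

Lemma KM_attained mu : exists2 L, (\dim L <= mu)%N & Kdiff C1 C2 L = KM C1 C2 mu.
Proof.
have zero_attained : `[< exists L : {vspace 'rV[F]_n},
    (\dim L <= mu)%N /\ Kdiff C1 C2 L = (@ord0 (m * n))%:Z >].
  by apply/asboolP; exists 0%VS; rewrite dimv0 Kdiff0.
rewrite /KM (bigop.bigmax_eq_arg _ zero_attained).
by case: arg_maxnP => // k /asboolP [L [dimL kL]] _; exists L.
Qed.

Lemma KM0 : KM C1 C2 0 = 0.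
Proof.
have [L dimL <-] := KM_attained 0.
by move: dimL; rewrite leqn0 dimv_eq0 => /eqP ->; apply: Kdiff0.
Qed.

Lemma KM_full : KM C1 C2 n = (\dim C1)%:Z - (\dim C2)%:Z.
Proof.
apply/le_anti/andP; split; first by have [L _ <-] := KM_attained n; apply: Kdiff_le_dim.
have <- : Kdiff C1 C2 fullv = (\dim C1)%:Z - (\dim C2)%:Z.
  by rewrite /Kdiff VLfull !capvf.
by apply: Kdiff_le_KM; rewrite dimvf dim_matrix; lia.
Qed.

Lemma KM_monotone mu : KM C1 C2 mu <= KM C1 C2 mu.+1.
Proof. by have [L dimL <-] := KM_attained mu; apply/Kdiff_le_KM/leqW. Qed.

Lemma KM_step_le mu : KM C1 C2 mu.+1 - KM C1 C2 mu <= m%:Z.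
Proof.
have [L dimL <-] := KM_attained mu.+1.
have [dimL_le|dimL_gt] := leqP (\dim L) mu.
  by have := Kdiff_le_KM dimL_le; lia.
have L_neq0 : L != 0%VS by rewrite -dimv_eq0 -lt0n; lia.
have [L' [sL' dimL' dimVL]] := VL_drop_vline L_neq0.
have := Kdiff_subv_le sL'; have : (\dim L' <= mu)%N by lia.
by move/Kdiff_le_KM; lia.
Qed.

End RowSpaceRestriction.

Theorem proposition13 (F : fieldType) (m n : nat)
    (C1 C2 : {vspace 'M[F]_(m, n)}) :
  (C2 <= C1)%VS -> C2 != C1 ->
  [/\ KM C1 C2 0 = 0,
      KM C1 C2 n = (\dim C1)%:Z - (\dim C2)%:Z
    & forall mu : nat, (mu < n)%N ->
        0 <= KM C1 C2 mu.+1 - KM C1 C2 mu <= m%:Z].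
Proof.
move=> sC21 _; split; [exact: KM0 | exact: KM_full | move=> mu _].
by rewrite subr_ge0 KM_monotone ?KM_step_le.
Qed.
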